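(* Let $S,T$ be totally ordered sets and $M\colon S\times T\to\mathbf{Vec}$ pointwise finite-dimensional, middle exact and indecomposable. If there exist $x\le x'$ in $S$ and $y\le y'$ in $T$ such that, with $a=(x,y)$, $b=(x,y')$, $c=(x',y)$, $\ker M(a\le b)\cap\ker M(a\le c)\neq0$, then $M\cong k_B$ for a block $B$ of type db.
   Context: $S\times T$ has the product order; modules are functors to $k$-vector spaces with structure maps $M(p\le q)$. Middle exact: for all $x\le x'$, $y\le y'$ with $a=(x,y),b=(x,y'),c=(x',y),d=(x',y')$, the sequence $M_a\to M_b\oplus M_c\to M_d$ with maps $(M(a\le b),M(a\le c))$ and $M(b\le d)-M(c\le d)$ is exact at the middle. A block of type db is a set $J_S\times J_T$ where $J_S\subseteq S$ and $J_T\subseteq T$ are non-empty downward-closed subsets. $k_B$ is $k$ on $B$, $0$ elsewhere, with identity maps within $B$ and zero otherwise. *)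

From HB Require Import structures.
From mathcomp Require Import all_boot all_order all_algebra.
Set Implicit Arguments. Unset Strict Implicit. Unset Printing Implicit Defensive.
Import Order.TTheory GRing.Theory.
Local Open Scope ring_scope.

(* A (pointwise finite-dimensional) module over S x T, given concretely:
   M(x,y) = k^(pdim x y) (row vectors), and for (x,y) <= (x',y') the
   structure map M((x,y) <= (x',y')) acts by v |-> v *m pmor x y x' y'.
   Values of pmor on non-comparable pairs are irrelevant (never used). *)
Record pmod (k : fieldType) (dS dT : Order.disp_t)
    (S : orderType dS) (T : orderType dT) := PMod {
  pdim : S -> T -> nat;
  pmor : forall (x : S) (y : T) (x' : S) (y' : T),
           'M[k]_(pdim x y, pdim x' y')
}.

Section Defs.
Variables (k : fieldType) (dS dT : Order.disp_t)
  (S : orderType dS) (T : orderType dT).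

Definition is_pmod (M : pmod k S T) : Prop :=
  (forall x y, pmor M x y x y = 1%:M) /\
  (forall x y x' y' x'' y'',
     (x <= x')%O -> (x' <= x'')%O -> (y <= y')%O -> (y' <= y'')%O ->
     pmor M x y x'' y'' = pmor M x y x' y' *m pmor M x' y' x'' y'').

Definition pmod_hom (M N : pmod k S T)
    (f : forall x y, 'M[k]_(pdim M x y, pdim N x y)) : Prop :=
  forall x y x' y', (x <= x')%O -> (y <= y')%O ->
    pmor M x y x' y' *m f x' y' = f x y *m pmor N x y x' y'.

Definition pmod_iso (M N : pmod k S T) : Prop :=
  exists (f : forall x y, 'M[k]_(pdim M x y, pdim N x y))
         (g : forall x y, 'M[k]_(pdim N x y, pdim M x y)),
    pmod_hom f /\ pmod_hom g /\
    forall x y, f x y *m g x y = 1%:M /\ g x y *m f x y = 1%:M.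

Definition pmod_dsum (N1 N2 : pmod k S T) : pmod k S T :=
  @PMod k dS dT S T (fun x y => (pdim N1 x y + pdim N2 x y)%N)
    (fun x y x' y' => block_mx (pmor N1 x y x' y') 0 0 (pmor N2 x y x' y')).

Definition pmod_zero (N : pmod k S T) : Prop := forall x y, pdim N x y = 0%N.

Definition indecomposable (M : pmod k S T) : Prop :=
  ~ pmod_zero M /\
  forall N1 N2 : pmod k S T, is_pmod N1 -> is_pmod N2 ->
    pmod_iso M (pmod_dsum N1 N2) -> pmod_zero N1 \/ pmod_zero N2.

(* middle exactness: with a=(x,y), b=(x,y'), c=(x',y), d=(x',y'), the
   sequence M_a -> M_b (+) M_c -> M_d,  v |-> (vA_ab, vA_ac),
   (u,w) |-> uA_bd - wA_cd, is exact at the middle (image = kernel). *)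
Definition middle_exact (M : pmod k S T) : Prop :=
  forall x x' y y', (x <= x')%O -> (y <= y')%O ->
    forall w : 'rV[k]_(pdim M x y' + pdim M x' y),
      w *m col_mx (pmor M x y' x' y') (- pmor M x' y x' y') = 0 <->
      exists v : 'rV[k]_(pdim M x y),
        w = v *m row_mx (pmor M x y x y') (pmor M x y x' y).

Definition db_block (JS : S -> bool) (JT : T -> bool) : Prop :=
  (exists s, JS s) /\ (forall s s', (s' <= s)%O -> JS s -> JS s') /\
  (exists t, JT t) /\ (forall t t', (t' <= t)%O -> JT t -> JT t').

Definition kB (JS : S -> bool) (JT : T -> bool) : pmod k S T :=
  @PMod k dS dT S T (fun x y => if JS x && JT y then 1%N else 0%N)
    (fun x y x' y' => \matrix_(i, j)
       (if [&& JS x, JT y, JS x' & JT y'] then 1 else 0)).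

End Defs.

From HB Require Import structures.
From mathcomp Require Import all_boot all_order all_algebra.
From mathcomp Require Import boolp classical_sets.

Set Implicit Arguments. Unset Strict Implicit. Unset Printing Implicit Defensive.
Import Order.TTheory GRing.Theory.
Local Open Scope ring_scope.

(* Take the witness [v] at [(x0, y0)] for which the two kernels killing it have
   minimal total dimension; middle exactness then makes the nonvanishing images
   of [v] a rectangle, and [J_S] ([J_T]) consists of the [s <= x0] and of the [s]
   where the image of [v] at [(s, y0)] is nonzero (similarly at [(x0, t)]).
   Middle exactness also lifts [v] to every point below [(x0, y0)] by vectors
   dying outside [B = J_S x J_T], and [v] has normalising functionals at the
   points of [B] above [(x0, y0)].  Zorn's lemma on inverse systems of
   finite-dimensional affine spaces chooses both families compatibly with the
   structure maps, which gives maps [k_B -> M -> k_B] composing to the identity;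
   as [M] is indecomposable, [M] is isomorphic to [k_B]. *)

Section AffineSets.
Variable k : fieldType.

Lemma addmxN_sub m1 m2 n (A B : 'M[k]_(m1, n)) (C : 'M_(m2, n)) :
  (A <= C)%MS -> (B <= C)%MS -> (A - B <= C)%MS.
Proof. by move=> sAC sBC; rewrite addmx_sub // -scaleN1r scalemx_sub. Qed.

Definition affine_set n (P : 'rV[k]_n -> Prop) :=
  exists (u0 : 'rV_n) m (D : 'M_(m, n)), forall u, P u <-> (u - u0 <= D)%MS.

Lemma affine_set_ext n (P Q : 'rV[k]_n -> Prop) :
  (forall u, P u <-> Q u) -> affine_set P -> affine_set Q.
Proof. by move=> PQ [u0 [m [D hP]]]; exists u0, m, D => u; rewrite -PQ. Qed.

Section Directions.
Variables (n m1 m2 : nat) (P Q : 'rV[k]_n -> Prop) (u0 u1 : 'rV[k]_n).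
Variables (D : 'M[k]_(m1, n)) (E : 'M[k]_(m2, n)).
Hypothesis defP : forall u, P u <-> (u - u0 <= D)%MS.
Hypothesis defQ : forall u, Q u <-> (u - u1 <= E)%MS.
Hypothesis sPQ : forall u, P u -> Q u.

Lemma affine_subset_dir : (D <= E)%MS.
Proof.
apply/row_subP => i.
have /defQ Q0 : Q u0 by apply/sPQ/defP; rewrite subrr sub0mx.
have /defQ Qi : Q (u0 + row i D) by apply/sPQ/defP; rewrite addrC addKr row_sub.
have -> : row i D = (u0 + row i D - u1) - (u0 - u1).
  by rewrite opprB addrA subrK addrC addKr.
exact: addmxN_sub.
Qed.

Lemma affine_subset_rank_eq : (\rank E <= \rank D)%N -> forall u, Q u -> P u.
Proof.
move=> rED u /defQ Qu; apply/defP.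
have sED : (E <= D)%MS.
  have [_ <-] := mxrank_leqif_sup affine_subset_dir.
  by rewrite eqn_leq rED mxrankS // affine_subset_dir.
have /defQ Q0 : Q u0 by apply/sPQ/defP; rewrite subrr sub0mx.
have -> : u - u0 = (u - u1) - (u0 - u1) by rewrite opprB addrA subrK.
by apply: addmxN_sub; apply: submx_trans sED.
Qed.

End Directions.

Lemma affine_set_nonempty n (P : 'rV[k]_n -> Prop) : affine_set P -> exists u, P u.
Proof. by case=> u0 [m [D defP]]; exists u0; apply/defP; rewrite subrr sub0mx. Qed.

Section DirectedFamilies.
Variables (n : nat) (J : Type) (dom : J -> Prop) (Q : J -> 'rV[k]_n -> Prop).
Hypothesis affQ : forall j, dom j -> affine_set (Q j).
Hypothesis dirQ : forall j j', dom j -> dom j' ->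
  exists2 j'', dom j'' & forall u, Q j'' u -> Q j u /\ Q j' u.

(* A member of minimal dimension is contained in all the others. *)
Lemma affine_directed_least j0 : dom j0 ->
  exists2 j1, dom j1 & forall j u, dom j -> Q j1 u -> Q j u.
Proof.
move=> dj0.
pose has_dim r := `[< exists j u0 m (D : 'M_(m, n)),
  [/\ dom j, forall u, Q j u <-> (u - u0 <= D)%MS & \rank D = r] >].
have ex_dim : exists r, has_dim r.
  have [u0 [m [D defQ]]] := affQ dj0.
  by exists (\rank D); apply/asboolP; exists j0, u0, m, D.
case: (ex_minnP ex_dim) => r /asboolP [j1 [u1 [m1 [D1 [dj1 defQ1 rD1]]]]] min_r.
exists j1 => // j u dj Q1u.
have [j2 dj2 sQ2] := dirQ dj1 dj.
have [u2 [m2 [D2 defQ2]]] := affQ dj2.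
have r_le : (r <= \rank D2)%N by apply: min_r; apply/asboolP; exists j2, u2, m2, D2.
have sQ21 u' : Q j2 u' -> Q j1 u' by case/sQ2.
have := affine_subset_rank_eq defQ2 defQ1 sQ21; rewrite rD1 => /(_ r_le) sQ12.
by have [] := sQ2 u (sQ12 u Q1u).
Qed.

Lemma affine_directed_cap j0 : dom j0 -> affine_set (fun u => forall j, dom j -> Q j u).
Proof.
move=> /affine_directed_least [j1 dj1 leastQ1].
apply: affine_set_ext (affQ dj1) => u.
by split=> [Q1u j dj|]; [apply: leastQ1|apply].
Qed.

End DirectedFamilies.

Lemma affine_set_solutions n m (C : 'M[k]_(n, m)) (d : 'rV_m) :
  (exists u, u *m C = d) -> affine_set (fun u => u *m C = d).
Proof.
case=> z zC; exists z, n, (kermx C) => u.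
by rewrite sub_kermx mulmxBl zC subr_eq0; split => [->|/eqP].
Qed.

Lemma affine_set_image n m (P : 'rV[k]_n -> Prop) (G : 'M_(n, m)) :
  affine_set P -> affine_set (fun v => exists z, P z /\ z *m G = v).
Proof.
case=> u0 [p [D defP]]; exists (u0 *m G), p, (D *m G) => v; split.
  by case=> z [/defP Pz <-]; rewrite -mulmxBl submxMr.
case/submxP=> x defv; exists (u0 + x *m D); split.
  by apply/defP; rewrite addrC addKr submxMl.
by rewrite mulmxDl -mulmxA -defv addrC subrK.
Qed.

Lemma affine_set_fibre n m (P : 'rV[k]_n -> Prop) (G : 'M_(n, m)) e :
  affine_set P -> (exists z, P z /\ z *m G = e) ->
  affine_set (fun z => P z /\ z *m G = e).
Proof.
case=> u0 [p [D defP]] [z1 [/defP Pz1 z1G]].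
exists z1, n, (D :&: kermx G)%MS => u.
rewrite sub_capmx sub_kermx mulmxBl z1G subr_eq0; split.
  case=> /defP Pu ->; rewrite eqxx andbT.
  have -> : u - z1 = (u - u0) - (z1 - u0) by rewrite opprB addrA subrK.
  exact: addmxN_sub.
case/andP=> sD /eqP ->; split => //; apply/defP.
have -> : u - u0 = (u - z1) + (z1 - u0) by rewrite addrA subrK.
exact: addmx_sub.
Qed.

End AffineSets.

Section Kernels.
Variable k : fieldType.

Lemma rank_kermx_mulmx_lt n m p (A : 'M[k]_(n, m)) (X : 'M_(m, p)) (v : 'rV_n) :
  v *m A != 0 -> v *m A *m X = 0 -> (\rank (kermx A) < \rank (kermx (A *m X)))%N.
Proof.
move=> vA_nz vAX0.
have sAAX : (kermx A <= kermx (A *m X))%MS.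
  by rewrite sub_kermx mulmxA (sub_kermxP (submx_refl _)) mul0mx.
rewrite (ltn_leqif (mxrank_leqif_sup sAAX)); apply: contra vA_nz => sAXA.
by apply/eqP/sub_kermxP; apply: submx_trans sAXA; apply/sub_kermxP; rewrite mulmxA.
Qed.

Lemma monotone_ker_least d (I : orderType d) n (m : I -> nat)
    (A : forall i, 'M[k]_(n, m i)) (C : I -> bool) i1 :
  C i1 ->
  (forall i j, C i -> C j -> (i <= j)%O -> forall u : 'rV_n, u *m A i = 0 -> u *m A j = 0) ->
  exists2 i0, C i0 & forall u : 'rV_n, u *m A i0 = 0 -> forall j, C j -> u *m A j = 0.
Proof.
move=> Ci1 monoA.
have [|i j Ci Cj|i0 Ci0 least] := affine_directed_least (dom := C)
  (Q := fun i u => u *m A i = 0) _ _ Ci1.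
- by move=> i _; apply: affine_set_solutions; exists 0; rewrite mul0mx.
- by exists (Order.min i j) => [|u]; case: leP => [ij|/ltW ji];
    rewrite // => Au; split=> //; apply: monoA Au.
- by exists i0 => // u Au j Cj; apply: least.
Qed.

Lemma row_dual_exists n (w : 'rV[k]_n) :
  w != 0 -> exists r : 'rV_n, r *m w^T = 1%:M.
Proof.
move=> w_nz; have [j wj_nz] : exists j, w 0 j != 0.
  apply/existsP; apply: contraR w_nz => /existsPn w0; apply/eqP/rowP => j.
  by rewrite mxE; apply/eqP/negbNE.
exists ((w 0 j)^-1 *: delta_mx 0 j).
rewrite -scalemxAl -rowE; apply/matrixP => a b; rewrite !ord1 !mxE eqxx /=.
by rewrite mulVf.
Qed.

End Kernels.

Unset Implicit Arguments.
Section AffineInverseSystem.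
Variables (k : fieldType) (I : Type) (le : I -> I -> Prop).
Hypothesis le_refl : forall i, le i i.
Hypothesis le_trans : forall i j l, le i j -> le j l -> le i l.
Hypothesis le_lb : forall i j, exists l, le l i /\ le l j.
Variables (n : I -> nat) (F : forall i j, 'M[k]_(n i, n j)).
Hypothesis F_id : forall i, F i i = 1%:M.
Hypothesis F_comp : forall i j l, le i j -> le j l -> F i l = F i j *m F j l.
Variable L : forall i, 'rV[k]_(n i) -> Prop.
Hypothesis L_affine : forall i, affine_set (L i).
Hypothesis L_map : forall i j u, le i j -> L i u -> L j (u *m F i j).

Arguments le_trans {i j l}.
Arguments F_comp {i j l}.

Definition affine_subsystem (A : forall i, 'rV[k]_(n i) -> Prop) :=
  [/\ forall i, affine_set (A i), forall i u, A i u -> L i u &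
      forall i j u, le i j -> A i u -> A j (u *m F i j)].

Definition subsystem := {A | affine_subsystem A}.

Definition contains (A B : subsystem) : bool :=
  `[< forall i u, sval B i u -> sval A i u >].

Let L_subsystem : affine_subsystem L. Proof. by []. Qed.

Lemma chain_contains_bounded (C : set subsystem) : total_on C contains ->
  exists B, forall A, C A -> contains A B.
Proof.
move=> totC; have [[A0 CA0]|C0] := pselect (exists A, C A); last first.
  by exists (exist _ L L_subsystem) => A CA; case: C0; exists A.
pose capC i u := forall A, C A -> sval A i u.
have capC_sub : affine_subsystem capC.
  split=> [i|i u /(_ A0 CA0)|i j u ij capCu A CA].
  - apply: (affine_directed_cap (dom := C)) CA0 => [A _|A A' CA CA'].
      by case: (svalP A).
    have [/asboolP sAA'|/asboolP sA'A] := totC A A' CA CA'.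
      by exists A' => // u A'u; split; first apply: sAA'.
    by exists A => // u Au; split; last apply: sA'A.
  - by case: (svalP A0) => _ + _; apply.
  - by case: (svalP A) => _ _; apply; last exact: capCu.
by exists (exist _ capC capC_sub) => A CA; apply/asboolP => i u /(_ A CA).
Qed.

Lemma exists_minimal_subsystem : exists A : subsystem, premaximal contains A.
Proof.
apply: (ZL_preorder (exist _ L L_subsystem)) => [A|A B C|].
- exact/asboolP.
- by move=> /asboolP sBA /asboolP sCB; apply/asboolP => i u /sCB /sBA.
- exact: chain_contains_bounded.
Qed.

Section MinimalSubsystem.
Variable A : subsystem.
Hypothesis minA : premaximal contains A.
Let A0 := sval A.
Let A0_affine : forall i, affine_set (A0 i). Proof. by case: (svalP A). Qed.
Let A0_map i j u : le i j -> A0 i u -> A0 j (u *m F i j).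
Proof. by case: (svalP A) => _ _; apply. Qed.

Lemma minimal_subsystem_least B : affine_subsystem B ->
  (forall i u, B i u -> A0 i u) -> forall i u, A0 i u -> B i u.
Proof.
move=> subB sBA.
by have /asboolP := minA (exist _ B subB) (introT (asboolP _) sBA).
Qed.

(* The images of the [A0 i], [i <= j], cut out a subsystem of [A0]; by
   minimality it is all of [A0]. *)
Lemma minimal_subsystem_surj :
  forall i j u, le i j -> A0 j u -> exists z, A0 i z /\ z *m F i j = u.
Proof.
pose A' j u := forall i, le i j -> exists z, A0 i z /\ z *m F i j = u.
have sA'A j u : A' j u -> A0 j u.
  by case/(_ j (le_refl j)) => z [A0z]; rewrite F_id mulmx1 => <-.
have subA' : affine_subsystem A'.
  split=> [j|j u /sA'A|i' j' u ij A'u l lj].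
  - apply: (affine_directed_cap (dom := le^~ j)) (le_refl j) => [i _|i i' ij i'j].
      exact: affine_set_image.
    have [l [li li']] := le_lb i i'.
    exists l => [|v [z [A0z <-]]]; first exact: le_trans li ij.
    split; [exists (z *m F l i)|exists (z *m F l i')];
      by rewrite -mulmxA -F_comp //; split; first exact: A0_map.
  - by case: (svalP A) => _ + _; apply.
  - have [m [ml mi']] := le_lb l i'.
    have [z0 [A0z0 <-]] := A'u m mi'.
    exists (z0 *m F m l); split; first exact: A0_map.
    by rewrite -mulmxA -(F_comp ml lj) -mulmxA -F_comp // (le_trans mi' ij).
by move=> i j u ij /(minimal_subsystem_least _ subA' sA'A); apply.
Qed.

(* Same argument with the images of the fibres of [A0 l] over [e]. *)
Lemma minimal_subsystem_singleton i0 e : A0 i0 e -> forall u, A0 i0 u -> u = e.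
Proof.
move=> A0e.
pose A'' j v := forall l, le l j -> le l i0 ->
  exists z, A0 l z /\ z *m F l i0 = e /\ z *m F l j = v.
have sA''A j v : A'' j v -> A0 j v.
  have [l [lj li0]] := le_lb j i0.
  by case/(_ l lj li0) => z [A0z [_ <-]]; apply: A0_map.
have subA'' : affine_subsystem A''.
  split=> [j|j v /sA''A|i j v ij A''v l lj li0].
  - have [l0 [l0j l0i0]] := le_lb j i0.
    pose fibre l z := A0 l z /\ z *m F l i0 = e.
    have: affine_set (fun v => forall l, le l j /\ le l i0 ->
                        exists z, fibre l z /\ z *m F l j = v).
      apply: (affine_directed_cap (dom := fun l => le l j /\ le l i0)) (conj l0j l0i0).
        move=> l [_ li0]; apply/affine_set_image/affine_set_fibre => //.
        exact: minimal_subsystem_surj.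
      move=> l l' [lj li0] [l'j l'i0]; have [m [ml ml']] := le_lb l l'.
      exists m => [|v [z [[A0z ze] <-]]]; first by split; apply: le_trans ml _.
      split; [exists (z *m F m l)|exists (z *m F m l')];
        by rewrite /fibre -!mulmxA -!F_comp //; split; first split; first exact: A0_map.
    apply: affine_set_ext => v; split=> [h l lj li0|h l [lj li0]].
      by have [z [[]]] := h l (conj lj li0); exists z.
    by have [z [A0z [ze zv]]] := h l lj li0; exists z.
  - by case: (svalP A) => _ + _; apply.
  - have [m [ml mi]] := le_lb l i.
    have [z0 [A0z0 [z0e <-]]] := A''v m mi (le_trans ml li0).
    exists (z0 *m F m l); split; first exact: A0_map.
    split; first by rewrite -mulmxA -F_comp.
    by rewrite -mulmxA -(F_comp ml lj) -mulmxA -F_comp // (le_trans mi ij).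
move=> u A0u; have := minimal_subsystem_least _ subA'' sA''A _ _ A0u i0 (le_refl i0) (le_refl i0).
by case=> z [_]; rewrite F_id mulmx1 => -[-> ->].
Qed.

End MinimalSubsystem.

(* A minimal subsystem, given by Zorn's lemma, consists of singletons. *)
Theorem affine_inverse_system_thread : exists u : forall i, 'rV[k]_(n i),
  (forall i, L i (u i)) /\ (forall i j, le i j -> u i *m F i j = u j).
Proof.
have [A minA] := exists_minimal_subsystem.
have [A_affine A_L A_map] := svalP A.
pose u i := sval (cid (affine_set_nonempty (A_affine i))).
have Au i : sval A i (u i) by rewrite /u; case: cid.
exists u; split=> [i|i j ij]; first exact: A_L.
by apply: (minimal_subsystem_singleton A minA j _ (Au j)); apply: A_map.
Qed.

End AffineInverseSystem.
Set Implicit Arguments.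

Section Retract.
Variables (k : fieldType) (dS dT : Order.disp_t) (S : orderType dS) (T : orderType dT).
Variables (M N : pmod k S T).
Variables (W : forall x y, 'M[k]_(pdim N x y, pdim M x y))
          (C : forall x y, 'M[k]_(pdim M x y, pdim N x y)).
Hypotheses (homW : pmod_hom W) (homC : pmod_hom C).
Hypothesis WC : forall x y, W x y *m C x y = 1%:M.

(* [compl_proj] is the idempotent projecting [M] onto the kernel of [C]; the
   complement of [N] in [M] is its image, with basis [compl_base]. *)
Definition compl_proj x y := 1%:M - C x y *m W x y.
Definition compl_base x y := locked (row_base (compl_proj x y)).
Definition compl_coord x y := locked (col_base (compl_proj x y)).

Lemma compl_proj_idem x y : compl_proj x y *m compl_proj x y = compl_proj x y.
Proof.
rewrite /compl_proj mulmxBl mul1mx mulmxBr mulmx1 mulmxA -(mulmxA (C x y)) WC.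
by rewrite mulmx1 subrr subr0.
Qed.

Lemma compl_coord_base x y : compl_coord x y *m compl_base x y = compl_proj x y.
Proof. by rewrite /compl_coord /compl_base -!lock mulmx_base. Qed.

Lemma compl_coord_inj x y m (X Y : 'M_(_, m)) :
  compl_coord x y *m X = compl_coord x y *m Y -> X = Y.
Proof. by rewrite /compl_coord -lock; exact/row_full_inj/col_base_full. Qed.

Lemma compl_base_inj x y m (X Y : 'M_(m, _)) :
  X *m compl_base x y = Y *m compl_base x y -> X = Y.
Proof. by rewrite /compl_base -lock; exact/row_free_inj/row_base_free. Qed.

Lemma compl_base_coord x y : compl_base x y *m compl_coord x y = 1%:M.
Proof.
apply: (@compl_base_inj x y); rewrite mul1mx; apply: (@compl_coord_inj x y).
by rewrite !mulmxA compl_coord_base -mulmxA compl_coord_base compl_proj_idem.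
Qed.

Lemma W_compl_coord x y : W x y *m compl_coord x y = 0.
Proof.
apply: (@compl_base_inj x y); rewrite mul0mx -mulmxA compl_coord_base.
by rewrite /compl_proj mulmxBr mulmx1 mulmxA WC mul1mx subrr.
Qed.

Lemma compl_base_C x y : compl_base x y *m C x y = 0.
Proof.
apply: (@compl_coord_inj x y); rewrite mulmx0 mulmxA compl_coord_base.
by rewrite /compl_proj mulmxBl mul1mx -mulmxA WC mulmx1 subrr.
Qed.

Definition retract_compl : pmod k S T :=
  @PMod k dS dT S T (fun x y => \rank (compl_proj x y))
    (fun x y x' y' => compl_base x y *m pmor M x y x' y' *m compl_coord x' y').

Lemma compl_base_pmor_proj x y x' y' : (x <= x')%O -> (y <= y')%O ->
  compl_base x y *m pmor M x y x' y' *m compl_proj x' y' =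
  compl_base x y *m pmor M x y x' y'.
Proof.
move=> xx' yy'; rewrite /compl_proj mulmxBr mulmx1 -!mulmxA.
by rewrite (mulmxA (pmor M _ _ _ _)) homC // !mulmxA compl_base_C !mul0mx subr0.
Qed.

Lemma retract_compl_pmod : is_pmod M -> is_pmod retract_compl.
Proof.
case=> pmor_id pmor_comp; split=> [x y|x y x' y' x'' y'' xx' x'x'' yy' y'y''] /=.
  by rewrite pmor_id mulmx1 compl_base_coord.
rewrite !mulmxA -(mulmxA _ (compl_coord x' y')) compl_coord_base.
by rewrite compl_base_pmor_proj // (pmor_comp _ _ x' y') // !mulmxA.
Qed.

Lemma retract_dsum_iso : pmod_iso M (pmod_dsum N retract_compl).
Proof.
exists (fun x y => row_mx (C x y) (compl_coord x y)).
exists (fun x y => col_mx (W x y) (compl_base x y)).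
split; [|split] => [x y x' y' xx' yy'|x y x' y' xx' yy'|x y] /=.
- rewrite mul_mx_row mul_row_block !mulmx0 addr0 add0r homC //; congr row_mx.
  have WMc : C x y *m (W x y *m (pmor M x y x' y' *m compl_coord x' y')) = 0.
    by rewrite (mulmxA (W x y)) -homW // -mulmxA W_compl_coord !mulmx0.
  by rewrite !mulmxA compl_coord_base /compl_proj !mulmxBl mul1mx -!mulmxA WMc subr0.
- rewrite mul_block_col mul_col_mx !mul0mx addr0 add0r homW //; congr col_mx.
  by rewrite -(mulmxA _ (compl_coord x' y')) compl_coord_base compl_base_pmor_proj.
- rewrite mul_row_col compl_coord_base /compl_proj addrC subrK; split=> //.
  by rewrite mul_col_row WC compl_base_C W_compl_coord compl_base_coord -scalar_mx_block.
Qed.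

Lemma indecomposable_retract_iso : is_pmod M -> is_pmod N ->
  indecomposable M -> ~ pmod_zero N -> pmod_iso M N.
Proof.
move=> pM pN [_ indM] N_nz.
have [//|compl0] := indM N retract_compl pN (retract_compl_pmod pM) retract_dsum_iso.
have CW x y : C x y *m W x y = 1%:M.
  by move/eqP: (compl0 x y); rewrite mxrank_eq0 subr_eq0 => /eqP <-.
by exists C, W; do !split.
Qed.

End Retract.

Section BlockModule.
Variables (k : fieldType) (dS dT : Order.disp_t) (S : orderType dS) (T : orderType dT).
Variables (JS : S -> bool) (JT : T -> bool).
Hypothesis JS_down : forall s s', (s' <= s)%O -> JS s -> JS s'.
Hypothesis JT_down : forall t t', (t' <= t)%O -> JT t -> JT t'.

Local Notation kB := (kB k JS JT).

Lemma kB_index x y (i : 'I_(pdim kB x y)) : JS x && JT y.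
Proof. by case: i => /=; case: (JS x && JT y). Qed.

Lemma kB_index_eq x y (i j : 'I_(pdim kB x y)) : i = j.
Proof.
have dim_le1 : (pdim kB x y <= 1)%N by rewrite /=; case: ifP.
apply: ord_inj; move: (leq_trans (ltn_ord i) dim_le1) (leq_trans (ltn_ord j) dim_le1).
by rewrite !ltnS !leqn0 => /eqP-> /eqP->.
Qed.

Lemma kB_pmod : is_pmod kB.
Proof.
split=> [x y|x y x' y' x'' y'' xx' x'x'' yy' y'y'']; apply/matrixP => i j.
  have /andP[Jx Jy] := kB_index i.
  by rewrite !mxE Jx Jy (kB_index_eq i j) eqxx.
have /andP[Jx Jy] := kB_index i; have /andP[Jx'' Jy''] := kB_index j.
have Jx' := JS_down x'x'' Jx''; have Jy' := JT_down y'y'' Jy''.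
rewrite !mxE; under eq_bigr do rewrite !mxE Jx Jy Jx' Jy' Jx'' Jy'' mulr1.
by rewrite sumr_const card_ord /= Jx Jy Jx' Jy' Jx'' Jy''.
Qed.

Lemma kB_nonzero : (exists x, JS x) -> (exists y, JT y) -> ~ pmod_zero kB.
Proof. by move=> [x Jx] [y Jy] /(_ x y); rewrite /= Jx Jy. Qed.

Variable M : pmod k S T.

Definition kB_inj (w : forall x y, 'rV[k]_(pdim M x y)) x y :
  'M[k]_(pdim kB x y, pdim M x y) := \matrix_(i, j) w x y 0 j.

Definition kB_proj (c : forall x y, 'cV[k]_(pdim M x y)) x y :
  'M[k]_(pdim M x y, pdim kB x y) := \matrix_(i, j) c x y i 0.

Lemma kB_inj_hom (w : forall x y, 'rV[k]_(pdim M x y)) :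
  (forall x y x' y', (x <= x')%O -> (y <= y')%O -> w x y *m pmor M x y x' y' = w x' y') ->
  (forall x y, ~~ (JS x && JT y) -> w x y = 0) -> pmod_hom (kB_inj w).
Proof.
move=> w_pmor w_out x y x' y' xx' yy'; apply/matrixP => i j.
have /andP[Jx Jy] := kB_index i.
rewrite !mxE; under eq_bigr do rewrite !mxE; under [RHS]eq_bigr do rewrite !mxE.
have -> : \sum_l w x y 0 l * pmor M x y x' y' l j = (w x y *m pmor M x y x' y') 0 j.
  by rewrite mxE.
rewrite w_pmor // sumr_const card_ord /= Jx Jy.
case Jxy': (JS x' && JT y'); first by rewrite mul1r.
by rewrite w_out ?Jxy' // mxE mulr0n.
Qed.

Lemma kB_proj_hom (c : forall x y, 'cV[k]_(pdim M x y)) :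
  (forall x y x' y', (x <= x')%O -> (y <= y')%O -> JS x' -> JT y' ->
     pmor M x y x' y' *m c x' y' = c x y) -> pmod_hom (kB_proj c).
Proof.
move=> c_pmor x y x' y' xx' yy'; apply/matrixP => i j.
have /andP[Jx' Jy'] := kB_index j.
have Jx := JS_down xx' Jx'; have Jy := JT_down yy' Jy'.
rewrite !mxE; under eq_bigr do rewrite !mxE; under [RHS]eq_bigr do rewrite !mxE.
have -> : \sum_l pmor M x y x' y' i l * c x' y' l 0 = (pmor M x y x' y' *m c x' y') i 0.
  by rewrite mxE.
by rewrite c_pmor // sumr_const card_ord /= Jx Jy Jx' Jy' mulr1.
Qed.

Lemma kB_inj_proj (w : forall x y, 'rV[k]_(pdim M x y)) (c : forall x y, 'cV[k]_(pdim M x y)) :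
  (forall x y, JS x -> JT y -> w x y *m c x y = 1%:M) ->
  forall x y, kB_inj w x y *m kB_proj c x y = 1%:M.
Proof.
move=> wc x y; apply/matrixP => i j.
have /andP[Jx Jy] := kB_index i.
rewrite !mxE; under eq_bigr do rewrite !mxE.
have -> : \sum_l w x y 0 l * c x y l 0 = (w x y *m c x y) 0 0 by rewrite mxE.
by rewrite wc // (kB_index_eq i j) !mxE !eqxx.
Qed.

End BlockModule.

Section MiddleExactModule.
Variables (k : fieldType) (dS dT : Order.disp_t) (S : orderType dS) (T : orderType dT).
Variable M : pmod k S T.
Hypothesis pM : is_pmod M.
Hypothesis meM : middle_exact M.
Local Notation A := (pmor M).

Lemma pmor_id x y : A x y x y = 1%:M. Proof. by case: pM. Qed.

Lemma pmor_comp x y x' y' x'' y'' :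
  (x <= x')%O -> (x' <= x'')%O -> (y <= y')%O -> (y' <= y'')%O ->
  A x y x'' y'' = A x y x' y' *m A x' y' x'' y''.
Proof. by case: pM => _; apply. Qed.

Lemma pmor_ker_right x y s s' (u : 'rV[k]_(pdim M x y)) :
  (x <= s)%O -> (s <= s')%O -> u *m A x y s y = 0 -> u *m A x y s' y = 0.
Proof. by move=> xs ss' u0; rewrite (@pmor_comp x y s y) // mulmxA u0 mul0mx. Qed.

Lemma pmor_ker_up x y t t' (u : 'rV[k]_(pdim M x y)) :
  (y <= t)%O -> (t <= t')%O -> u *m A x y x t = 0 -> u *m A x y x t' = 0.
Proof. by move=> yt tt' u0; rewrite (@pmor_comp x y x t) // mulmxA u0 mul0mx. Qed.

Lemma ker_lift_down x x' t y (u : 'rV[k]_(pdim M x y)) :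
  (x <= x')%O -> (t <= y)%O -> u *m A x y x' y = 0 ->
  exists u' : 'rV_(pdim M x t), u' *m A x t x y = u /\ u' *m A x t x' t = 0.
Proof.
move=> xx' ty u0.
have := (meM xx' ty (row_mx u 0)).1.
rewrite mul_row_col u0 mul0mx addr0 => /(_ erefl) [u'].
by rewrite mul_mx_row => /eq_row_mx [/esym u'A /esym u'0]; exists u'.
Qed.

Lemma ker_lift_left s x y y' (u : 'rV[k]_(pdim M x y)) :
  (s <= x)%O -> (y <= y')%O -> u *m A x y x y' = 0 ->
  exists u' : 'rV_(pdim M s y), u' *m A s y x y = u /\ u' *m A s y s y' = 0.
Proof.
move=> sx yy' u0.
have := (meM sx yy' (row_mx 0 u)).1.
rewrite mul_row_col mulmxN u0 mul0mx add0r oppr0 => /(_ erefl) [u'].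
by rewrite mul_mx_row => /eq_row_mx [/esym u'0 /esym u'A]; exists u'.
Qed.

Lemma ker_split x y s t (v : 'rV[k]_(pdim M x y)) :
  (x <= s)%O -> (y <= t)%O -> v *m A x y s t = 0 ->
  exists z : 'rV_(pdim M x y), z *m A x y x t = v *m A x y x t /\ z *m A x y s y = 0.
Proof.
move=> xs yt v0.
have := (meM xs yt (row_mx (v *m A x y x t) 0)).1.
rewrite mul_row_col mul0mx addr0 -mulmxA -pmor_comp // v0 => /(_ erefl) [z].
by rewrite mul_mx_row => /eq_row_mx [/esym zt /esym zs]; exists z.
Qed.

Lemma ker_right_least x y (C : S -> bool) s1 : C s1 -> (forall s, C s -> (x <= s)%O) ->
  exists2 s0, C s0 & forall u : 'rV[k]_(pdim M x y),
    u *m A x y s0 y = 0 -> forall s, C s -> u *m A x y s y = 0.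
Proof.
move=> Cs1 geC; apply: (monotone_ker_least (A := fun s => A x y s y)) Cs1 _.
by move=> s s' Cs _ ss' u; apply: pmor_ker_right (geC s Cs) ss'.
Qed.

Lemma ker_up_least x y (C : T -> bool) t1 : C t1 -> (forall t, C t -> (y <= t)%O) ->
  exists2 t0, C t0 & forall u : 'rV[k]_(pdim M x y),
    u *m A x y x t0 = 0 -> forall t, C t -> u *m A x y x t = 0.
Proof.
move=> Ct1 geC; apply: (monotone_ker_least (A := fun t => A x y x t)) Ct1 _.
by move=> t t' Ct _ tt' u; apply: pmor_ker_up (geC t Ct) tt'.
Qed.

Definition rect_support x y (v : 'rV[k]_(pdim M x y)) :=
  forall s t, (x <= s)%O -> (y <= t)%O ->
    v *m A x y s y != 0 -> v *m A x y x t != 0 -> v *m A x y s t != 0.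

(* Minimise the total dimension of the two kernels killing the witness: a
   failure of [rect_support] yields, by [ker_split], a witness with a strictly
   smaller horizontal kernel. *)
Lemma exists_rect_support_witness x y x' y' (v : 'rV[k]_(pdim M x y)) :
  (x <= x')%O -> (y <= y')%O -> v != 0 -> v *m A x y x y' = 0 -> v *m A x y x' y = 0 ->
  exists (w : 'rV[k]_(pdim M x y)) x1 y1,
    [/\ w != 0, (x <= x1)%O, (y <= y1)%O, w *m A x y x1 y = 0 & w *m A x y x y1 = 0]
    /\ rect_support w.
Proof.
move=> xx' yy' v_nz vy' vx'.
pose witness_dim r := `[< exists (w : 'rV[k]_(pdim M x y)) x1 y1,
  [/\ w != 0, (x <= x1)%O, (y <= y1)%O, w *m A x y x1 y = 0 & w *m A x y x y1 = 0]
  /\ (\rank (kermx (A x y x1 y)) + \rank (kermx (A x y x y1)))%N = r >].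
have ex_dim : exists r, witness_dim r.
  by eexists; apply/asboolP; exists v, x', y'.
case: (ex_minnP ex_dim) => r /asboolP [w [x1 [y1 [[w_nz xx1 yy1 wx1 wy1] wr]]]] min_r.
exists w, x1, y1; split=> // s t xs yt ws wt; apply/eqP => wst.
have [z [zt zs]] := ker_split xs yt wst.
have sx1 : (s <= x1)%O.
  by case: leP => // /ltW x1s; case/eqP: ws; apply: pmor_ker_right wx1.
have ty1 : (t <= y1)%O.
  by case: leP => // /ltW y1t; case/eqP: wt; apply: pmor_ker_up wy1.
have z_nz : z != 0 by apply: contraNneq wt => z0; rewrite -zt z0 mul0mx.
have zy1 : z *m A x y x y1 = 0 by rewrite (@pmor_comp x y x t) // mulmxA zt -mulmxA -pmor_comp.
have lt_ker : (\rank (kermx (A x y s y)) < \rank (kermx (A x y x1 y)))%N.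
  by rewrite (@pmor_comp x y s y x1 y) // (rank_kermx_mulmx_lt ws) // -mulmxA -pmor_comp.
have : (r <= \rank (kermx (A x y s y)) + \rank (kermx (A x y x y1)))%N.
  by apply: min_r; apply/asboolP; exists z, s, y1; split; split=> //; apply: le_trans ty1.
by rewrite -wr leqNgt ltn_add2r lt_ker.
Qed.

End MiddleExactModule.

Section RectSupportBlock.
Variables (k : fieldType) (dS dT : Order.disp_t) (S : orderType dS) (T : orderType dT).
Variable M : pmod k S T.
Hypothesis pM : is_pmod M.
Hypothesis meM : middle_exact M.
Local Notation A := (pmor M).
Variables (x0 x1 : S) (y0 y1 : T) (v : 'rV[k]_(pdim M x0 y0)).
Hypotheses (v_nz : v != 0) (x0x1 : (x0 <= x1)%O) (y0y1 : (y0 <= y1)%O).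
Hypotheses (v_x1 : v *m A x0 y0 x1 y0 = 0) (v_y1 : v *m A x0 y0 x0 y1 = 0).
Hypothesis v_rect : rect_support v.

Let compA := pmor_comp pM.
Let idA := pmor_id pM.

Definition blockS s := (s <= x0)%O || (v *m A x0 y0 s y0 != 0).
Definition blockT t := (t <= y0)%O || (v *m A x0 y0 x0 t != 0).

Lemma notin_blockS s : ~~ blockS s -> (x0 < s)%O /\ v *m A x0 y0 s y0 = 0.
Proof. by rewrite /blockS negb_or -ltNge negbK => /andP[? /eqP]. Qed.

Lemma notin_blockT t : ~~ blockT t -> (y0 < t)%O /\ v *m A x0 y0 x0 t = 0.
Proof. by rewrite /blockT negb_or -ltNge negbK => /andP[? /eqP]. Qed.

Lemma blockS_down s s' : (s' <= s)%O -> blockS s -> blockS s'.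
Proof.
move=> s's /orP[sx0|vs]; first by rewrite /blockS (le_trans s's sx0).
rewrite /blockS; case: leP => //= x0s'; apply: contraNneq vs => vs'.
by apply/eqP; exact: (pmor_ker_right pM (ltW x0s') s's vs').
Qed.

Lemma blockT_down t t' : (t' <= t)%O -> blockT t -> blockT t'.
Proof.
move=> t't /orP[ty0|vt]; first by rewrite /blockT (le_trans t't ty0).
rewrite /blockT; case: leP => //= y0t'; apply: contraNneq vt => vt'.
by apply/eqP; exact: (pmor_ker_up pM (ltW y0t') t't vt').
Qed.

Lemma blockS_x0 : blockS x0. Proof. by rewrite /blockS lexx. Qed.
Lemma blockT_y0 : blockT y0. Proof. by rewrite /blockT lexx. Qed.

Lemma exists_notin_blockS : exists s, ~~ blockS s.
Proof.
exists x1; rewrite /blockS negb_or v_x1 eqxx andbT -ltNge lt_neqAle x0x1 andbT.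
by apply: contraNneq v_nz => x10; move: v_x1; rewrite -x10 idA mulmx1 => ->.
Qed.

Lemma exists_notin_blockT : exists t, ~~ blockT t.
Proof.
exists y1; rewrite /blockT negb_or v_y1 eqxx andbT -ltNge lt_neqAle y0y1 andbT.
by apply: contraNneq v_nz => y10; move: v_y1; rewrite -y10 idA mulmx1 => ->.
Qed.

Lemma blockS_image s : blockS s -> (x0 <= s)%O -> v *m A x0 y0 s y0 != 0.
Proof.
case/orP=> [sx0 x0s|//]; have -> : s = x0 by apply/le_anti; rewrite sx0 x0s.
by rewrite idA mulmx1.
Qed.

Lemma blockT_image t : blockT t -> (y0 <= t)%O -> v *m A x0 y0 x0 t != 0.
Proof.
case/orP=> [ty0 y0t|//]; have -> : t = y0 by apply/le_anti; rewrite ty0 y0t.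
by rewrite idA mulmx1.
Qed.

Lemma block_image_nonzero s t : blockS s -> blockT t -> (x0 <= s)%O -> (y0 <= t)%O ->
  v *m A x0 y0 s t != 0.
Proof. by move=> Bs Bt x0s y0t; apply: v_rect; rewrite ?blockS_image ?blockT_image. Qed.

Definition block_lift s t (u : 'rV[k]_(pdim M s t)) :=
  [/\ u *m A s t x0 y0 = v, forall s', ~~ blockS s' -> u *m A s t s' t = 0
    & forall t', ~~ blockT t' -> u *m A s t s t' = 0].

(* Lift [v] down the column of [x0] to [(x0, t)], killed at some [s0] outside
   [J_S], then leftwards to [(s, t)], killed at some [t0] outside [J_T]; the
   choice of [s0] and [t0] by [ker_right_least] and [ker_up_least] makes the
   lift die at every point outside the block. *)
Lemma block_lift_exists s t : (s <= x0)%O -> (t <= y0)%O -> exists u, @block_lift s t u.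
Proof.
move=> sx0 ty0.
have [s1 nBs1] := exists_notin_blockS; have [t1 nBt1] := exists_notin_blockT.
have [s0 nBs0 least_s0] := ker_right_least pM t nBs1
  (fun s' nBs' => ltW (notin_blockS nBs').1).
have [x0s0 vs0] := notin_blockS nBs0.
have [u1 [u1v u1s0]] := ker_lift_down meM (ltW x0s0) ty0 vs0.
have u1_up t' : ~~ blockT t' -> u1 *m A x0 t x0 t' = 0.
  move=> /notin_blockT[y0t' vt'].
  by rewrite (@compA x0 t x0 y0) ?(ltW y0t') // mulmxA u1v.
have [t0 nBt0 least_t0] := ker_up_least pM s nBt1
  (fun t' nBt' => le_trans ty0 (ltW (notin_blockT nBt').1)).
have [u2 [u2u1 u2t0]] := ker_lift_left meM sx0 (le_trans ty0 (ltW (notin_blockT nBt0).1))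
  (u1_up _ nBt0).
exists u2; split=> [|s' nBs'|]; last exact: least_t0.
  by rewrite (@compA s t x0 t) // mulmxA u2u1.
have x0s' := ltW (notin_blockS nBs').1.
by rewrite (@compA s t x0 t) ?(le_trans sx0) // mulmxA u2u1 (least_s0 _ u1s0).
Qed.

(* Only three of the defining equations matter, by [ker_right_least] and
   [ker_up_least]. *)
Lemma block_lift_affine s t : (s <= x0)%O -> (t <= y0)%O -> affine_set (@block_lift s t).
Proof.
move=> sx0 ty0.
have [s1 nBs1] := exists_notin_blockS; have [t1 nBt1] := exists_notin_blockT.
have [s0 nBs0 least_s0] := ker_right_least pM t nBs1
  (fun s' nBs' => le_trans sx0 (ltW (notin_blockS nBs').1)).
have [t0 nBt0 least_t0] := ker_up_least pM s nBt1
  (fun t' nBt' => le_trans ty0 (ltW (notin_blockT nBt').1)).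
pose C := row_mx (row_mx (A s t x0 y0) (A s t s0 t)) (A s t s t0).
pose d := row_mx (row_mx v (0 : 'rV_(pdim M s0 t))) (0 : 'rV_(pdim M s t0)).
have liftE u : u *m C = d <-> block_lift u.
  rewrite /C /d !mul_mx_row; split=> [/eq_row_mx[/eq_row_mx[uv us0] ut0]|[uv us ut]].
    by split=> // [s' /least_s0|t' /least_t0]; apply.
  by rewrite uv us ?ut.
apply: (affine_set_ext liftE); apply: affine_set_solutions.
by have [u /liftE] := block_lift_exists sx0 ty0; exists u.
Qed.

Lemma block_lift_pmor s t s' t' u : (s <= s')%O -> (t <= t')%O -> (s' <= x0)%O -> (t' <= y0)%O ->
  @block_lift s t u -> block_lift (u *m A s t s' t').
Proof.
move=> ss' tt' s'x0 t'y0 [uv us ut]; split=> [|s'' nBs''|t'' nBt''].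
- by rewrite -mulmxA -compA.
- have s's'' := le_trans s'x0 (ltW (notin_blockS nBs'').1).
  rewrite -mulmxA -(@compA s t s' t' s'' t') // (@compA s t s'' t s'' t') ?(le_trans ss') //.
  by rewrite mulmxA us // mul0mx.
- have t't'' := le_trans t'y0 (ltW (notin_blockT nBt'').1).
  rewrite -mulmxA -(@compA s t s' t' s' t'') // (@compA s t s t'' s' t'') ?(le_trans tt') //.
  by rewrite mulmxA ut // mul0mx.
Qed.

Definition pt_le (p q : S * T) := (p.1 <= q.1)%O /\ (p.2 <= q.2)%O.

Lemma pt_le_refl p : pt_le p p. Proof. by split. Qed.

Lemma pt_le_trans p q r : pt_le p q -> pt_le q r -> pt_le p r.
Proof. by move=> [pq1 pq2] [qr1 qr2]; split; [apply: le_trans qr1|apply: le_trans qr2]. Qed.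

(* Threads are indexed by all of [S * T]: the point [p] stands for [lo p], its
   clamp below [(x0, y0)]. *)
Definition lo (p : S * T) := (Order.min p.1 x0, Order.min p.2 y0).

Lemma lo_le p : pt_le (lo p) p /\ pt_le (lo p) (x0, y0).
Proof. by rewrite /pt_le /= !ge_min !lexx !orbT. Qed.

Lemma lo_mono p q : pt_le p q -> pt_le (lo p) (lo q).
Proof. by case=> pq1 pq2; split; apply: le_min2. Qed.

Lemma thread_below : exists u : forall p, 'rV[k]_(pdim M (lo p).1 (lo p).2),
  (forall p, block_lift (u p)) /\
  (forall p q, pt_le p q -> u p *m A (lo p).1 (lo p).2 (lo q).1 (lo q).2 = u q).
Proof.
apply: (affine_inverse_system_thread _ _ pt_le pt_le_refl pt_le_trans _ _
  (fun p q => A (lo p).1 (lo p).2 (lo q).1 (lo q).2) _ _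
  (fun p => @block_lift (lo p).1 (lo p).2)).
- by move=> p q; exists (Order.min p.1 q.1, Order.min p.2 q.2); rewrite /pt_le /= !ge_min !lexx !orbT.
- by move=> p; rewrite idA.
- by move=> p q r /lo_mono[pq1 pq2] /lo_mono[qr1 qr2]; rewrite (@compA _ _ (lo q).1 (lo q).2).
- by move=> p; have [_ [? ?]] := lo_le p; apply: block_lift_affine.
- move=> p q u /lo_mono[pq1 pq2]; have [_ [? ?]] := lo_le q.
  exact: block_lift_pmor.
Qed.

Definition block_dual s t (r : 'rV[k]_(pdim M s t)) := r *m (v *m A x0 y0 s t)^T = 1%:M.

Definition block_pt := {p : S * T | blockS p.1 && blockT p.2}.

(* The dual thread is indexed by the block, [i] standing for its clamp [hi i]
   above [(x0, y0)], which stays in the block. *)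
Definition hi (i : block_pt) := (Order.max (val i).1 x0, Order.max (val i).2 y0).

Lemma hi_ge i : pt_le (val i) (hi i) /\ pt_le (x0, y0) (hi i).
Proof. by rewrite /pt_le /= !le_max !lexx !orbT. Qed.

Lemma hi_in_block i : blockS (hi i).1 && blockT (hi i).2.
Proof.
case: i => [[s t] /= Bst]; have /andP[Bs Bt] := Bst; rewrite /hi /=.
by apply/andP; split; case: leP; rewrite ?blockS_x0 ?blockT_y0.
Qed.

Lemma hi_mono i j : pt_le (val i) (val j) -> pt_le (hi i) (hi j).
Proof. by case=> ij1 ij2; split; apply: le_max2. Qed.

Lemma block_pt_ub (i j : block_pt) : exists l : block_pt, pt_le (val i) (val l) /\ pt_le (val j) (val l).
Proof.
have maxB (s s' : S) t t' : blockS s && blockT t -> blockS s' && blockT t' ->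
    blockS (Order.max s s') && blockT (Order.max t t').
  by move=> /andP[Bs Bt] /andP[Bs' Bt']; apply/andP; split; case: leP.
exists (exist _ (Order.max (val i).1 (val j).1, Order.max (val i).2 (val j).2)
  (maxB _ _ _ _ (valP i) (valP j))).
by rewrite /pt_le /= !le_max !lexx !orbT.
Qed.

Lemma thread_above : exists c : forall i, 'rV[k]_(pdim M (hi i).1 (hi i).2),
  (forall i, block_dual (c i)) /\
  (forall i j, pt_le (val j) (val i) ->
     c i *m (A (hi j).1 (hi j).2 (hi i).1 (hi i).2)^T = c j).
Proof.
apply: (affine_inverse_system_thread _ _ (fun i j : block_pt => pt_le (val j) (val i))
  (fun i => pt_le_refl _) (fun i j l ij jl => pt_le_trans jl ij) _ _
  (fun i j => (A (hi j).1 (hi j).2 (hi i).1 (hi i).2)^T) _ _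
  (fun i => @block_dual (hi i).1 (hi i).2)).
- by move=> i j; have [l [il jl]] := block_pt_ub i j; exists l.
- by move=> i; rewrite idA trmx1.
- move=> i j l /hi_mono[ji1 ji2] /hi_mono[lj1 lj2].
  by rewrite (@compA _ _ (hi j).1 (hi j).2) // trmx_mul.
- move=> i; apply: affine_set_solutions; apply: row_dual_exists.
  have /andP[Bs Bt] := hi_in_block i; have [_ [? ?]] := hi_ge i.
  exact: block_image_nonzero.
- move=> i j r /hi_mono[ji1 ji2]; have [_ [? ?]] := hi_ge j.
  by rewrite /block_dual -mulmxA -trmx_mul -mulmxA -compA.
Qed.

Definition block_pt0 : block_pt := exist _ (x0, y0) (introT andP (conj blockS_x0 blockT_y0)).

Definition to_block_pt x y : block_pt := insubd block_pt0 (x, y).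

Lemma to_block_ptE x y : blockS x -> blockT y -> val (to_block_pt x y) = (x, y).
Proof. by move=> Bx By; rewrite insubdK // -topredE /= Bx By. Qed.

Lemma hi_to_block_pt x y : blockS x -> blockT y -> pt_le (x, y) (hi (to_block_pt x y)).
Proof. by move=> Bx By; have [+ _] := hi_ge (to_block_pt x y); rewrite to_block_ptE. Qed.

Section Threads.
Variable u : forall p, 'rV[k]_(pdim M (lo p).1 (lo p).2).
Hypothesis u_lift : forall p, block_lift (u p).
Hypothesis u_pmor : forall p q, pt_le p q -> u p *m A (lo p).1 (lo p).2 (lo q).1 (lo q).2 = u q.
Variable c : forall i, 'rV[k]_(pdim M (hi i).1 (hi i).2).
Hypothesis c_dual : forall i, block_dual (c i).
Hypothesis c_pmor : forall i j, pt_le (val j) (val i) ->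
  c i *m (A (hi j).1 (hi j).2 (hi i).1 (hi i).2)^T = c j.

Definition inj_row x y : 'rV[k]_(pdim M x y) := u (x, y) *m A (lo (x, y)).1 (lo (x, y)).2 x y.

Definition proj_col x y : 'cV[k]_(pdim M x y) :=
  A x y (hi (to_block_pt x y)).1 (hi (to_block_pt x y)).2 *m (c (to_block_pt x y))^T.

Lemma inj_row_pmor x y x' y' : (x <= x')%O -> (y <= y')%O ->
  inj_row x y *m A x y x' y' = inj_row x' y'.
Proof.
move=> xx' yy'; have pq : pt_le (x, y) (x', y') by [].
have [[? ?] _] := lo_le (x, y); have [[? ?] _] := lo_le (x', y'); have [? ?] := lo_mono pq.
by rewrite /inj_row -(u_pmor pq) -!mulmxA -!compA.
Qed.

Lemma inj_row_out x y : ~~ (blockS x && blockT y) -> inj_row x y = 0.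
Proof.
have [[? ?] _] := lo_le (x, y); have [_ u_s u_t] := u_lift (x, y).
rewrite negb_and /inj_row => /orP[nBx|nBy].
  by rewrite (@compA _ _ x (lo (x, y)).2) // mulmxA u_s // mul0mx.
by rewrite (@compA _ _ (lo (x, y)).1 y) // mulmxA u_t // mul0mx.
Qed.

Lemma inj_row_above x y : (x0 <= x)%O -> (y0 <= y)%O -> inj_row x y = v *m A x0 y0 x y.
Proof.
move=> x0x y0y; have [_ [? ?]] := lo_le (x, y); have [uv _ _] := u_lift (x, y).
by rewrite /inj_row (@compA _ _ x0 y0) // mulmxA uv.
Qed.

Lemma proj_col_pmor x y x' y' : (x <= x')%O -> (y <= y')%O -> blockS x' -> blockT y' ->
  A x y x' y' *m proj_col x' y' = proj_col x y.
Proof.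
move=> xx' yy' Bx' By'; have Bx := blockS_down xx' Bx'; have By := blockT_down yy' By'.
have [? ?] := hi_to_block_pt Bx By; have [? ?] := hi_to_block_pt Bx' By'.
have ij : pt_le (val (to_block_pt x y)) (val (to_block_pt x' y')).
  by rewrite !to_block_ptE.
have [? ?] := hi_mono ij.
by rewrite /proj_col -(c_pmor ij) trmx_mul trmxK !mulmxA -!compA.
Qed.

Lemma inj_row_proj_col x y : blockS x -> blockT y -> inj_row x y *m proj_col x y = 1%:M.
Proof.
move=> Bx By; have [? ?] := hi_to_block_pt Bx By.
have [_ [? ?]] := hi_ge (to_block_pt x y).
rewrite /proj_col mulmxA inj_row_pmor // inj_row_above //.
by rewrite -[LHS]trmxK trmx_mul trmxK c_dual trmx1.
Qed.

End Threads.

Lemma block_db : db_block blockS blockT.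
Proof.
split; [|split; [|split]].
- by exists x0; apply: blockS_x0.
- exact: blockS_down.
- by exists y0; apply: blockT_y0.
- exact: blockT_down.
Qed.

Lemma block_iso : indecomposable M -> pmod_iso M (kB k blockS blockT).
Proof.
move=> indM.
have [u [u_lift u_pmor]] := thread_below; have [c [c_dual c_pmor]] := thread_above.
apply: (indecomposable_retract_iso (kB_inj_hom (inj_row_pmor u_pmor) (inj_row_out u_lift))
  (kB_proj_hom blockS_down blockT_down (proj_col_pmor c_pmor))
  (kB_inj_proj (inj_row_proj_col u_lift u_pmor c_dual))) => //.
  exact: kB_pmod blockS_down blockT_down.
by apply: kB_nonzero; [exists x0; apply: blockS_x0|exists y0; apply: blockT_y0].
Qed.

End RectSupportBlock.

Theorem lemma5p5 (k : fieldType) (dS dT : Order.disp_t)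
  (S : orderType dS) (T : orderType dT) (M : pmod k S T) :
  is_pmod M -> middle_exact M -> indecomposable M ->
  (exists (x x' : S) (y y' : T), (x <= x')%O /\ (y <= y')%O /\
     exists v : 'rV[k]_(pdim M x y),
       v != 0 /\ v *m pmor M x y x y' = 0 /\ v *m pmor M x y x' y = 0) ->
  exists (JS : S -> bool) (JT : T -> bool),
    db_block JS JT /\ pmod_iso M (kB k JS JT).
Proof.
move=> pM meM indM [x [x' [y [y' [xx' [yy' [v [v_nz [vy' vx']]]]]]]]].
have [w [x1 [y1 [[w_nz xx1 yy1 wx1 wy1] w_rect]]]] :=
  exists_rect_support_witness pM meM xx' yy' v_nz vy' vx'.
exists (blockS w), (blockT w); split; first exact: block_db.
exact: (block_iso pM meM w_nz xx1 yy1 wx1 wy1 w_rect indM).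
Qed.
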